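(* Let $\vec s=(s_1,\dots,s_k)\in\mathbb{Z}_+^k$ with $n=\sum_l s_l$, and let $\pi_1,\pi_2,\pi_3$ be three $\vec s$-multipermutations. Then there is a pair $i<j$ such that $\mathrm{LCS}(\pi_i,\pi_j)\geq n^{1/3}$.
   Context: For $\vec s=(s_1,\dots,s_k)\in\mathbb{Z}_+^k$, an $\vec s$-multipermutation is a word over the alphabet $\{1,\dots,k\}$ in which each letter $l$ appears exactly $s_l$ times; its length is $\sum_l s_l$. A common subsequence of two words is a word that is a subsequence (letters taken in order, not necessarily consecutive) of both; $\mathrm{LCS}(w,w')$ is the length of a longest common subsequence of $w$ and $w'$. *)

From mathcomp Require Import all_boot.
Set Implicit Arguments. Unset Strict Implicit. Unset Printing Implicit Defensive.

(* Alphabet {1,...,k} is represented by 'I_k (letter l+1 <-> ordinal l).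
   Words are sequences over 'I_k. *)

Definition multiperm (k : nat) (s : 'I_k -> nat) (w : seq 'I_k) : bool :=
  [forall l : 'I_k, count_mem l w == s l].

Definition common_subseq (T : eqType) (u w w' : seq T) : bool :=
  subseq u w && subseq u w'.

(* LCS w w' : length of a longest common subsequence.  Every subsequence of w
   is mask m w for some bit-mask m of length size w, so we maximise over those. *)
Definition LCS (T : eqType) (w w' : seq T) : nat :=
  \max_(m : (size w).-tuple bool | subseq (mask m w) w') size (mask m w).

From mathcomp Require Import all_boot.
Set Implicit Arguments. Unset Strict Implicit. Unset Printing Implicit Defensive.

(* Index the n letter occurrences by pairs (l, r) with r < s l; each word w
   places them at distinct positions pos_w.  For two words u, v call a set of
   occurrences a chain when pos_u and pos_v order it the same way; a chain
   spells a common subsequence, so it has at most LCS(u, v) elements.  Let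
   h_uv(x) be the size of a longest chain ending at x.  If pos_1 x < pos_1 y
   then, whichever way pos_2 and pos_3 compare x and y, one of h_12, h_13, h_23
   increases strictly from x to y (Erdos-Szekeres), so x |-> (h_12, h_13, h_23)
   is injective and n is at most the cube of the largest pairwise LCS. *)

Lemma subseq_map_nth (A : eqType) (d : A) (u : seq A) (ps : seq nat) :
  sorted ltn ps -> all (fun i => i < size u) ps -> subseq (map (nth d u) ps) u.
Proof.
move=> ps_sorted ps_bounded.
have -> : ps = filter (mem ps) (iota 0 (size u)).
  apply: (irr_sorted_eq ltn_trans ltnn ps_sorted).
    exact: (sorted_filter ltn_trans _ (iota_ltn_sorted 0 _)).
  move=> i; rewrite mem_filter mem_iota /= add0n.
  by apply/idP/andP => [i_ps|[]//]; split=> //; apply: (allP ps_bounded).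
rewrite -[X in subseq _ X](mkseq_nth d u) /mkseq.
exact/map_subseq/filter_subseq.
Qed.

Lemma size_common_subseq_le_LCS (A : eqType) (c u w : seq A) :
  subseq c u -> subseq c w -> size c <= LCS u w.
Proof.
case/subseqP => m size_m -> sub_w.
have size_m_eq : size m == size u by apply/eqP.
exact: (leq_bigmax_cond (Tuple size_m_eq) sub_w).
Qed.

Section Chains.

Variable T : finType.
Implicit Types (p q : T -> nat) (S : {set T}).

Definition chain p q S :=
  [forall x in S, [forall y in S, (p x < p y) ==> (q x < q y)]].

Lemma chainP p q S :
  reflect {in S &, forall x y, p x < p y -> q x < q y} (chain p q S).
Proof.
apply: (iffP idP) => [/forall_inP chS x y xS yS|chS].
  by move/forall_inP: (chS x xS) => /(_ y yS) /implyP.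
by apply/forall_inP => x xS; apply/forall_inP => y yS; apply/implyP; apply: chS.
Qed.

Lemma card_chain_le_LCS (A : eqType) (u w : seq A) (lbl : T -> A) p q S :
    injective p -> (forall x, p x < size u) -> (forall x, q x < size w) ->
    (forall x, nth (lbl x) u (p x) = lbl x) ->
    (forall x, nth (lbl x) w (q x) = lbl x) ->
  chain p q S -> #|S| <= LCS u w.
Proof.
move=> p_inj p_lt q_lt nth_p nth_q /chainP chS.
have [->|[x0 _]] := set_0Vmem S; first by rewrite cards0.
set L := sort (relpre p leq) (enum S).
have L_S : all (mem S) L by apply/allP => x; rewrite mem_sort mem_enum.
have pL_sorted : sorted ltn (map p L).
  rewrite ltn_sorted_uniq_leq (map_inj_uniq p_inj) sort_uniq enum_uniq.
  by rewrite sorted_map sort_sorted // => x y; apply: leq_total.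
have qL_sorted : sorted ltn (map q L).
  rewrite sorted_map; rewrite sorted_map in pL_sorted.
  exact: (sub_in_sorted _ L_S pL_sorted).
have lblL r (v : seq A) : (forall x, r x < size v) ->
    (forall x, nth (lbl x) v (r x) = lbl x) ->
    map lbl L = map (nth (lbl x0) v) (map r L).
  move=> r_lt nth_r; rewrite -map_comp; apply: eq_map => x /=.
  by rewrite (set_nth_default (lbl x) _ (r_lt x)) nth_r.
have -> : #|S| = size (map lbl L) by rewrite size_map size_sort cardE.
apply: size_common_subseq_le_LCS.
  rewrite (lblL p u p_lt nth_p); apply: subseq_map_nth => //.
  by apply/allP => i /mapP [x _ ->].
rewrite (lblL q w q_lt nth_q); apply: subseq_map_nth => //.
by apply/allP => i /mapP [x _ ->].
Qed.

Definition chain_len p q x :=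
  \max_(S | [&& chain p q S, x \in S & [forall y in S, p y <= p x]]) #|S|.

Lemma chain_len_gt0 p q x : 0 < chain_len p q x.
Proof.
rewrite -(cards1 x); apply: leq_bigmax_cond; rewrite set11 /=.
apply/andP; split; first by apply/chainP => a b /set1P -> /set1P ->; rewrite ltnn.
by apply/forall_inP => y /set1P ->.
Qed.

Lemma chain_len_le p q x B :
  (forall S, chain p q S -> #|S| <= B) -> chain_len p q x <= B.
Proof. by move=> chain_le; apply/bigmax_leqP => S /and3P [/chain_le]. Qed.

Lemma chain_len_lt p q x y :
  injective p -> p x < p y -> q x < q y -> chain_len p q x < chain_len p q y.
Proof.
move=> p_inj pxy qxy; have len_y_gt0 := chain_len_gt0 p q y.
rewrite -(prednK len_y_gt0) ltnS.
apply/bigmax_leqP => S /and3P [/chainP chS xS /forall_inP S_le].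
have yS : y \notin S by apply/negP => /S_le; rewrite leqNgt pxy.
rewrite -ltnS prednK // -add1n -[1]/(nat_of_bool true) -yS -cardsU1.
apply: leq_bigmax_cond; rewrite setU11 /=; apply/andP; split; last first.
  by apply/forall_inP => z /setU1P [->//|/S_le pz]; apply: leq_trans pz (ltnW pxy).
apply/chainP => a b /setU1P [-> | aS] /setU1P [-> | bS]; rewrite ?ltnn //.
- by move=> pyb; move: (S_le b bS); rewrite leqNgt (ltn_trans pxy pyb).
- move=> _; have [->//|ax] := eqVneq a x.
  have pax : p a < p x.
    by rewrite ltn_neqAle S_le // andbT (inj_eq p_inj).
  exact: ltn_trans (chS _ _ aS xS pax) qxy.
- exact: chS.
Qed.

Lemma chain_len_triple_inj p1 p2 p3 :
    injective p1 -> injective p2 -> injective p3 ->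
  injective (fun x => (chain_len p1 p2 x, chain_len p1 p3 x, chain_len p2 p3 x)).
Proof.
move=> p1_inj p2_inj p3_inj.
suff neq x y : p1 x < p1 y ->
    (chain_len p1 p2 x, chain_len p1 p3 x, chain_len p2 p3 x) <>
    (chain_len p1 p2 y, chain_len p1 p3 y, chain_len p2 p3 y).
  move=> x y e; have [/neq//|/neq e'|/p1_inj//] := ltngtP (p1 x) (p1 y).
  by case: e' (esym e).
move=> p1xy [e12 e13 e23].
have [p2xy|p2yx|/p2_inj exy] := ltngtP (p2 x) (p2 y); last first.
- by move: p1xy; rewrite exy ltnn.
- have [p3xy|p3yx|/p3_inj exy] := ltngtP (p3 x) (p3 y); last first.
  + by move: p1xy; rewrite exy ltnn.
  + by move: (chain_len_lt p2_inj p2yx p3yx); rewrite e23 ltnn.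
  + by move: (chain_len_lt p1_inj p1xy p3xy); rewrite e13 ltnn.
- by move: (chain_len_lt p1_inj p1xy p2xy); rewrite e12 ltnn.
Qed.

End Chains.

Lemma card_le_cube (T : finType) (f g h : T -> nat) (B : nat) :
    injective (fun x => (f x, g x, h x)) ->
    (forall x, 0 < f x <= B) -> (forall x, 0 < g x <= B) ->
    (forall x, 0 < h x <= B) ->
  #|T| <= B ^ 3.
Proof.
case: B => [|B] fgh_inj f_in g_in h_in.
  by rewrite leqn0; apply/eqP/eq_card0 => x; move: (f_in x); rewrite ltnNge => /andP[/negP].
pose shift m : 'I_B.+1 := inord m.-1.
have shiftK m : 0 < m <= B.+1 -> (shift m).+1 = m.
  by case/andP => m_gt0 m_le; rewrite inordK ?prednK // -ltnS prednK.
have shift3_inj : injective (fun x => (shift (f x), shift (g x), shift (h x))).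
  move=> x y [ef eg eh]; apply: fgh_inj.
  by rewrite -(shiftK _ (f_in x)) -(shiftK _ (g_in x)) -(shiftK _ (h_in x)) ef eg eh
     !shiftK.
have := leq_card _ shift3_inj.
by rewrite !card_prod card_ord !expnS expn0 muln1 mulnA.
Qed.

Section Occurrences.

Variable A : eqType.

Definition occ (w : seq A) (l : A) : seq nat :=
  [seq i <- iota 0 (size w) | nth l w i == l].

Lemma size_occ w l : size (occ w l) = count_mem l w.
Proof.
by rewrite size_filter -[in RHS](mkseq_nth l w) /mkseq count_map.
Qed.

Lemma occ_uniq w l : uniq (occ w l).
Proof. exact/filter_uniq/iota_uniq. Qed.

Lemma mem_occ w l i : (i \in occ w l) = (i < size w) && (nth l w i == l).
Proof. by rewrite mem_filter mem_iota andbC. Qed.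

End Occurrences.

Section OccurrencePositions.

Variables (k : nat) (s : 'I_k -> nat) (w : seq 'I_k).
Hypothesis w_perm : multiperm s w.

Definition occ_pos (x : {l : 'I_k & 'I_(s l)}) : nat :=
  nth 0 (occ w (tag x)) (tagged x).

Lemma size_occ_multiperm l : size (occ w l) = s l.
Proof. by rewrite size_occ; move/forallP: w_perm => /(_ l) /eqP. Qed.

Lemma occ_pos_mem x : occ_pos x \in occ w (tag x).
Proof. by apply: mem_nth; rewrite size_occ_multiperm. Qed.

Lemma occ_pos_lt x : occ_pos x < size w.
Proof. by have := occ_pos_mem x; rewrite mem_occ => /andP []. Qed.

Lemma nth_occ_pos x : nth (tag x) w (occ_pos x) = tag x.
Proof. by have := occ_pos_mem x; rewrite mem_occ => /andP [_ /eqP]. Qed.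

Lemma occ_pos_inj : injective occ_pos.
Proof.
move=> [l r] [l' r'] e.
have ell' : l = l'.
  have /= := nth_occ_pos (Tagged _ r); rewrite e (set_nth_default l') ?occ_pos_lt //.
  by have /= -> := nth_occ_pos (Tagged _ r').
subst l'; congr Tagged; apply/val_inj.
have r_lt (t : 'I_(s l)) : (t : nat) < size (occ w l) by rewrite size_occ_multiperm.
by apply/eqP; rewrite -(nth_uniq 0 (r_lt r) (r_lt r') (occ_uniq w l)); apply/eqP.
Qed.

End OccurrencePositions.

Theorem lemma5 (k : nat) (s : 'I_k -> nat) (s_pos : forall l, 0 < s l)
    (pi1 pi2 pi3 : seq 'I_k) :
  multiperm s pi1 -> multiperm s pi2 -> multiperm s pi3 ->
  let n := \sum_(l < k) s l in
  let pi := [:: pi1; pi2; pi3] in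
  exists i j : nat, [/\ i < j, j < 3 &
    n <= (LCS (nth [::] pi i) (nth [::] pi j)) ^ 3].
Proof.
move=> perm1 perm2 perm3 n pi.
set B := maxn (LCS pi1 pi2) (maxn (LCS pi1 pi3) (LCS pi2 pi3)).
have chain_len_in u v (x : {l : 'I_k & 'I_(s l)}) :
    multiperm s u -> multiperm s v -> LCS u v <= B ->
  0 < chain_len (occ_pos u) (occ_pos v) x <= B.
  move=> perm_u perm_v uv_le; rewrite chain_len_gt0 /=.
  apply: leq_trans uv_le; apply: chain_len_le => S.
  exact: (card_chain_le_LCS (occ_pos_inj perm_u) (occ_pos_lt perm_u)
    (occ_pos_lt perm_v) (nth_occ_pos perm_u) (nth_occ_pos perm_v)).
have n_le : n <= B ^ 3.
  have -> : n = #|{: {l : 'I_k & 'I_(s l)}}|.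
    by rewrite card_tagged sumnE big_map big_enum; apply: eq_bigr => l _; rewrite card_ord.
  apply: card_le_cube (chain_len_triple_inj (occ_pos_inj perm1) (occ_pos_inj perm2)
    (occ_pos_inj perm3)) _ _ _ => x; apply: chain_len_in => //; rewrite /B.
  - exact: leq_maxl.
  - by rewrite (maxnC _ (LCS pi2 pi3)) maxnA leq_maxr.
  - by rewrite maxnA leq_maxr.
move: n_le; rewrite /B /maxn.
by case: ltnP => _; [case: ltnP => _|] => n_le; [exists 1, 2 | exists 0, 2 | exists 0, 1].
Qed.
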